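(* Let $g\geq 1$, $k\geq 1$, $r\geq 1$ be integers and let $x$ be an integer with $g+1\leq x\leq 2g$. Let $T$ be the tree obtained from $r$ stars $K_{1,g}$ with centers $v_1,\ldots,v_r$, one star $K_{1,x}$ with center $v_{r+1}$, and $k$ further vertices $w,u_1,\ldots,u_{k-1}$, by adding the edges $wu_i$ ($1\le i\le k-1$) and $wv_i$ ($1\leq i\leq r+1$). Then $T$ has order $n=(g+1)r+x+1+k$, has an $R_g$-cutset, and $$\kappa_g(T)=k.$$
   Context: All graphs are finite and simple. $K_{1,t}$ denotes the star with one center and $t$ leaves. A set $S\subseteq V(G)$ is a cutset if $G-S$ is disconnected. For a non-negative integer $g$, a cutset $S$ is an $R_g$-cutset if every connected component of $G-S$ has at least $g+1$ vertices. If $G$ has at least one $R_g$-cutset, the $g$-extra connectivity $\kappa_g(G)$ is the minimum cardinality of an $R_g$-cutset of $G$. *)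

From mathcomp Require Import all_boot.
Set Implicit Arguments. Unset Strict Implicit. Unset Printing Implicit Defensive.

Section Graphs.
Variables (V : finType) (e : rel V).

Definition del_rel (S : {set V}) : rel V :=
  fun x y => [&& x \notin S, y \notin S & e x y].

Definition comp_of (S : {set V}) (x : V) : {set V} :=
  [set y | connect (del_rel S) x y].

Definition is_cutset (S : {set V}) : bool :=
  [exists x, exists y, [&& x \notin S, y \notin S & ~~ connect (del_rel S) x y]].

Definition is_Rg_cutset (g : nat) (S : {set V}) : bool :=
  is_cutset S && [forall x, (x \notin S) ==> (g.+1 <= #|comp_of S x|)].

Definition has_Rg_cutset (g : nat) : Prop := exists S, is_Rg_cutset g S.

(* g-extra connectivity: minimum size of an R_g-cutset (meaningful only when
   one exists; default #|V| otherwise). *)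
Definition kappa (g : nat) : nat :=
  \big[minn/#|V|]_(S : {set V} | is_Rg_cutset g S) #|S|.
End Graphs.

(* Vertices:
   inl (inl (i, a)) : star i (i < r), a = 0 is the center v_{i+1}, a = 1..g leaves
   inl (inr a)      : star K_{1,x}, a = 0 is the center v_{r+1}, a = 1..x leaves
   inr a            : a = 0 is w, a = 1..k-1 are u_1..u_{k-1} *)
Definition Tvert (g r x k : nat) : finType :=
  (('I_r * 'I_g.+1) + 'I_x.+1 + 'I_k)%type.

Definition star_adj (m : nat) (a b : 'I_m) : bool :=
  ((val a == 0) && (val b != 0)) || ((val b == 0) && (val a != 0)).

Definition Tedge (g r x k : nat) : rel (Tvert g r x k) :=
  fun p q =>
  match p, q with
  | inl (inl (i, a)), inl (inl (j, b)) => (i == j) && star_adj a b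
  | inl (inr a), inl (inr b) => star_adj a b
  | inr a, inr b => star_adj a b
  | inr a, inl (inl (_, b)) => (val a == 0) && (val b == 0)
  | inl (inl (_, b)), inr a => (val a == 0) && (val b == 0)
  | inr a, inl (inr b) => (val a == 0) && (val b == 0)
  | inl (inr b), inr a => (val a == 0) && (val b == 0)
  | _, _ => false
  end.

From HB Require Import structures.
From mathcomp Require Import all_boot.
Set Implicit Arguments. Unset Strict Implicit. Unset Printing Implicit Defensive.

(* Let W = {w, u_1, ..., u_{k-1}} be the hub w together with its pendant
   vertices.  Two facts settle the theorem:
   - W is an R_g-cutset: T - W is the disjoint union of the r stars K_{1,g}
     and of K_{1,x}, each a component with at least g+1 vertices;
   - W is contained in every R_g-cutset S (this uses g >= 1, so that every
     component of T - S has a second vertex): if w were outside S, every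
     vertex outside S would reach w in T - S (centers and u_i are adjacent
     to w, a leaf is adjacent to its center, which must lie in its
     component), so S would not separate anything; and a pendant u_i
     outside S would be isolated in T - S once w is in S.
   A general lemma on finite graphs then says that an R_g-cutset contained
   in every R_g-cutset realises the minimum kappa_g. *)

(* minn is associative and commutative; this lets the generic bigop lemmas
   (e.g. bigD1) apply to the minimum defining kappa_g. *)
HB.instance Definition _ := SemiGroup.isComLaw.Build nat minn minnA minnC.

Section Graph.
Variables (V : finType) (e : rel V).

Lemma kappa_least_cutset (gx : nat) (S0 : {set V}) :
  is_Rg_cutset e gx S0 -> (forall S, is_Rg_cutset e gx S -> S0 \subset S) ->
  kappa e gx = #|S0|.
Proof.
move=> S0_Rg S0_least; apply/eqP; rewrite eqn_leq; apply/andP; split.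
  by rewrite /kappa (bigD1 S0) //= geq_minl.
rewrite /kappa; elim/big_ind: _ => [|m n hm hn|S S_Rg].
- exact: max_card.
- by rewrite leq_min hm hn.
- exact/subset_leq_card/S0_least.
Qed.

Lemma neighbour_of_big_comp (S : {set V}) (p : V) :
  1 < #|comp_of e S p| -> exists q, del_rel e S p q.
Proof.
case/card_gt1P=> a [b [ha hb nab]].
have [q qp qc] : exists2 q, q != p & q \in comp_of e S p.
  by case: (eqVneq a p) => [eap|nap]; [exists b; rewrite // -eap eq_sym | exists a].
move: qc; rewrite inE => /connectP[[|q' s] /=]; first by move=> _ qeq; rewrite qeq eqxx in qp.
by case/andP=> pq' _ _; exists q'.
Qed.

Hypothesis e_sym : symmetric e.

Lemma del_rel_sym (S : {set V}) : symmetric (del_rel e S).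
Proof. by move=> p q; rewrite /del_rel e_sym andbCA. Qed.

Lemma connect_del_sym (S : {set V}) : connect_sym (del_rel e S).
Proof. exact/sym_connect_sym/del_rel_sym. Qed.

Lemma not_cutset_of_hub (S : {set V}) (h : V) :
  (forall p, p \notin S -> connect (del_rel e S) p h) -> ~~ is_cutset e S.
Proof.
move=> to_h; apply/existsP=> -[p /existsP[q /and3P[pS qS /negP[]]]].
by apply: connect_trans (to_h p pS) _; rewrite connect_del_sym; apply: to_h.
Qed.

Lemma star_comp_card (S : {set V}) (m : nat) (f : 'I_m.+1 -> V) :
  injective f -> (forall b, b != ord0 -> del_rel e S (f ord0) (f b)) ->
  forall a, m.+1 <= #|comp_of e S (f a)|.
Proof.
move=> f_inj spokes.
have from_center b : connect (del_rel e S) (f ord0) (f b).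
  by case: (eqVneq b ord0) => [->|nb0]; [exact: connect0 | exact/connect1/spokes].
move=> a; have star_sub : f @: [set: 'I_m.+1] \subset comp_of e S (f a).
  apply/subsetP=> _ /imsetP[b _ ->]; rewrite inE.
  by apply: connect_trans (from_center b); rewrite connect_del_sym.
by rewrite -[m.+1]card_ord -cardsT -(card_imset _ f_inj) subset_leq_card.
Qed.

End Graph.

(* The tree T with k+1 vertices w, u_1, ..., u_k in the hub part, so that
   the hub w = inr ord0 always exists. *)
Section Tree.
Variables (g r x k : nat).
Local Notation V := (Tvert g r x k.+1).
Local Notation E := (@Tedge g r x k.+1).

Lemma Tedge_sym : symmetric E.
Proof.
have star_sym m (a b : 'I_m) : star_adj a b = star_adj b a by rewrite /star_adj orbC.
by move=> [[[i a]|a]|a] [[[j b]|b]|b] //=; rewrite star_sym // eq_sym.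
Qed.

Definition hub : V := inr ord0.

Definition near_hub (p : V) : bool :=
  match p with
  | inl (inl (_, a)) => val a == 0
  | inl (inr a) => val a == 0
  | inr _ => true
  end.

Lemma near_hub_connect (S : {set V}) (p : V) :
  near_hub p -> p \notin S -> hub \notin S -> connect (del_rel E S) p hub.
Proof.
move=> near pS hS; case: (eqVneq p hub) => [->|p_hub]; first exact: connect0.
apply: connect1; rewrite /del_rel pS hS /=.
case: p p_hub near {pS} => [[[i a]|a]|a] //= p_hub _.
rewrite /star_adj /= andbF /=; apply: contraNN p_hub => /eqP a0.
by apply/eqP; congr inr; apply: val_inj.
Qed.

Lemma leaf_neighbour_near_hub (p q : V) : ~~ near_hub p -> E p q -> near_hub q.
Proof.
case: p => [[[i a]|a]|a] //; case: q => [[[j b]|b]|b] //= leaf;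
by rewrite /star_adj ?(negbTE leaf) /= ?andbT ?andbF //; case/andP.
Qed.

Definition hub_set : {set V} := [set inr a | a : 'I_k.+1].

Lemma in_hub_set (p : V) : (p \in hub_set) = (if p is inr _ then true else false).
Proof.
case: p => [p|a]; last by apply/imsetP; exists a.
by apply/imsetP; case.
Qed.

Lemma card_hub_set : #|hub_set| = k.+1.
Proof. by rewrite card_imset ?card_ord // => a b []. Qed.

(* T - W consists of the r stars K_{1,g} and the star K_{1,x}. *)
Lemma hub_set_Rg_cutset : 0 < r -> g <= x -> is_Rg_cutset E g hub_set.
Proof.
move=> r_gt0 g_le_x; apply/andP; split.
  have small_stars_closed :
      closed (del_rel E hub_set) [pred p : V | if p is inl (inl _) then true else false].
    move=> p q; rewrite /del_rel !in_hub_set.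
    by case: p => [[[i a]|a]|a]; case: q => [[[j b]|b]|b].
  apply/existsP; exists (inl (inl (Ordinal r_gt0, ord0))).
  apply/existsP; exists (inl (inr ord0)); rewrite !in_hub_set /=.
  by apply/negP => /(closed_connect small_stars_closed).
have spoke m (b : 'I_m.+1) : b != ord0 -> star_adj ord0 b.
  move=> nb0; rewrite /star_adj /= andbF orbF.
  by apply: contraNN nb0 => /eqP b0; apply/eqP/val_inj.
apply/forallP=> -[[[i a]|a]|a]; apply/implyP; rewrite in_hub_set //= => _.
  apply: (star_comp_card Tedge_sym (f := fun b => inl (inl (i, b)))) => [b c [] //|b nb0].
  by rewrite /del_rel !in_hub_set /= eqxx spoke.
apply: (@leq_trans x.+1); first by rewrite ltnS.
apply: (star_comp_card Tedge_sym (f := fun b => inl (inr b))) => [b c [] //|b nb0].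
by rewrite /del_rel !in_hub_set /= spoke.
Qed.

Section ContainsHubSet.
Variable S : {set V}.
Hypotheses (g_gt0 : 0 < g) (S_Rg : is_Rg_cutset E g S).

(* Since g >= 1, every vertex outside S has a neighbour in T - S. *)
Lemma neighbour_outside (p : V) : p \notin S -> exists q, del_rel E S p q.
Proof.
move: S_Rg => /andP[_ /forallP big_comps] pS.
by apply: neighbour_of_big_comp; apply: leq_trans (implyP (big_comps p) pS).
Qed.

(* Otherwise every vertex outside S would reach the hub in T - S: directly
   if near the hub, and via its center if it is a star leaf. *)
Lemma hub_in_Rg_cutset : hub \in S.
Proof.
move: S_Rg => /andP[S_cut _]; apply: contraTT S_cut => hS.
apply: (not_cutset_of_hub Tedge_sym (h := hub)) => p pS.
have [near|leaf] := boolP (near_hub p); first exact: near_hub_connect.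
have [q pq] := neighbour_outside pS.
move: (pq) => /and3P[_ qS e_pq]; apply: connect_trans (connect1 pq) _.
exact: near_hub_connect (leaf_neighbour_near_hub leaf e_pq) qS hS.
Qed.

(* A pendant vertex u_i outside S would need a neighbour in T - S, but its
   only neighbour is the hub, which lies in S. *)
Lemma hub_set_sub_Rg_cutset : hub_set \subset S.
Proof.
apply/subsetP=> _ /imsetP[a _ ->].
have [a0|a_n0] := eqVneq (val a) 0.
  by rewrite (_ : a = ord0) ?hub_in_Rg_cutset //; apply: val_inj.
apply: contraT => aS; have [q] := neighbour_outside aS.
case/and3P=> _; case: q => [[[j b]|b]|b] //=; rewrite /star_adj (negbTE a_n0) //= andbT.
move=> qS b0; have b_ord0 : b = ord0 by apply/val_inj/eqP.
by rewrite b_ord0 hub_in_Rg_cutset in qS.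
Qed.

End ContainsHubSet.
End Tree.

Theorem lemma5p1 (g k r x : nat) :
  1 <= g -> 1 <= k -> 1 <= r -> g.+1 <= x <= g.*2 ->
  [/\ #|Tvert g r x k| = g.+1 * r + x + 1 + k,
      has_Rg_cutset (@Tedge g r x k) g
    & kappa (@Tedge g r x k) g = k].
Proof.
case: k => // k g_gt0 _ r_gt0 /andP[g_lt_x _].
have W_Rg := hub_set_Rg_cutset k r_gt0 (ltnW g_lt_x).
split.
- by rewrite /Tvert !card_sum card_prod !card_ord mulnC addn1 !addnS !addSn.
- by exists (hub_set g r x k).
- rewrite (kappa_least_cutset W_Rg) ?card_hub_set // => S.
  exact: hub_set_sub_Rg_cutset.
Qed.
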